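(* Let $\mathbf L=(L,\vee,\wedge,0,1)$ be a complemented modular lattice with $0\ne1$ and $F$ a filter of $\mathbf L$. Then $F$ is a deductive system of $\mathbf L$.
   Context: For $a\in L$, $a^+:=\{x\in L\mid a\vee x=1,\ a\wedge x=0\}$ (the set of all complements of $a$), and $a\to b:=\{x\vee(a\wedge b)\mid x\in a^+\}$. A deductive system of $\mathbf L$ is a subset $D\subseteq L$ such that $1\in D$, and whenever $a\in D$, $b\in L$ and $a\to b\subseteq D$, then $b\in D$. *)

From mathcomp Require Import all_boot all_order.
Set Implicit Arguments. Unset Strict Implicit. Unset Printing Implicit Defensive.
Import Order.TTheory.
Local Open Scope order_scope.

Definition modular_lattice (d : Order.disp_t) (T : tbLatticeType d) : Prop :=
  forall x y z : T, x <= z -> x `|` (y `&` z) = (x `|` y) `&` z.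

Definition complemented_lattice (d : Order.disp_t) (T : tbLatticeType d) : Prop :=
  forall a : T, exists x : T, a `|` x = \top /\ a `&` x = \bot.

Definition compls (d : Order.disp_t) (T : tbLatticeType d) (a : T) : T -> Prop :=
  fun x => a `|` x = \top /\ a `&` x = \bot.

Definition arrow (d : Order.disp_t) (T : tbLatticeType d) (a b : T) : T -> Prop :=
  fun y => exists x, compls a x /\ y = x `|` (a `&` b).

Definition is_filter (d : Order.disp_t) (T : tbLatticeType d) (F : T -> Prop) : Prop :=
  (exists x, F x) /\
  (forall x y : T, F x -> x <= y -> F y) /\
  (forall x y : T, F x -> F y -> F (x `&` y)).

Definition deductive_system (d : Order.disp_t) (T : tbLatticeType d) (D : T -> Prop) : Prop :=
  D \top /\
  (forall a b : T, D a -> (forall y, arrow a b y -> D y) -> D b).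

From mathcomp Require Import all_boot all_order.
Set Implicit Arguments.
Unset Strict Implicit.
Unset Printing Implicit Defensive.
Import Order.TTheory.
Local Open Scope order_scope.

(* If [x] is a complement of [a], modularity gives
   [a `&` (x `|` (a `&` b)) = (a `&` b) `|` (x `&` a) = a `&` b].  Hence a filter
   containing [a] and the element [x `|` (a `&` b)] of [a -> b] contains [a `&` b],
   and so [b]. *)

Lemma modular_meet_joinr (d : Order.disp_t) (T : tbLatticeType d) (a b x : T) :
  modular_lattice T -> a `&` x = \bot -> a `&` (x `|` (a `&` b)) = a `&` b.
Proof.
move=> modT ax0; have := modT (a `&` b) x a (leIl a b).
rewrite [x `&` a]meetC ax0 joinx0 => modE.
by rewrite meetC joinC -modE.
Qed.

Section Filter.

Variables (d : Order.disp_t) (T : tbLatticeType d) (F : T -> Prop).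
Hypothesis filterF : is_filter F.

Lemma filter_top : F \top.
Proof. case: filterF => [[x Fx] [upF _]]; exact: upF _ _ Fx (lex1 x). Qed.

Lemma filter_modus_ponens (a b x : T) :
  modular_lattice T -> compls a x -> F a -> F (x `|` (a `&` b)) -> F b.
Proof.
case: filterF => _ [upF meetF] modT [_ ax0] Fa Fxab.
have Fab : F (a `&` b).
  by rewrite -(modular_meet_joinr b modT ax0); apply: meetF.
exact: upF _ _ Fab (leIr b a).
Qed.

End Filter.

Theorem proposition7 (d : Order.disp_t) (T : tbLatticeType d) (F : T -> Prop) :
  modular_lattice T -> complemented_lattice T -> (\bot : T) <> \top ->
  is_filter F -> deductive_system F.
Proof.
move=> modT complT _ filterF; split; first exact: filter_top.
move=> a b Fa Farrow; have [x ax] := complT a.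
apply: (filter_modus_ponens filterF modT ax Fa).
by apply: Farrow; exists x.
Qed.
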